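(* Let $q$ be a prime power and $1\le k\le n-1$. If there exists a Cameron-Liebler $k$-set with parameter $x$ in $\mathrm{AG}(n,q)$, then there exists a Cameron-Liebler $k$-set of parameter $x+\frac{q^{n-k}-1}{q^{k+1}-1}$ in the projective closure $\mathrm{PG}(n,q)$ of $\mathrm{AG}(n,q)$.
   Context: A $k$-space is a $k$-dimensional projective subspace. $\left[{a\atop b}\right]_q=\frac{(q^a-1)\cdots(q^{a-b+1}-1)}{(q^b-1)\cdots(q-1)}$. $\mathrm{AG}(n,q)$ is $\mathrm{PG}(n,q)$ with a hyperplane $\pi_\infty$ removed; affine points are points outside $\pi_\infty$, affine $k$-spaces are $k$-spaces not contained in $\pi_\infty$. Let $P_n$ be the point-($k$-space) incidence matrix of $\mathrm{PG}(n,q)$ and $A_n$ the incidence matrix of affine points versus affine $k$-spaces. A set $\mathcal{L}$ of $k$-spaces of $\mathrm{PG}(n,q)$ is a Cameron-Liebler $k$-set of $\mathrm{PG}(n,q)$ if its characteristic vector lies in the real row space $\mathrm{Im}(P_n^T)$, with parameter $|\mathcal{L}|/\left[{n\atop k}\right]_q$; a set of affine $k$-spaces is a Cameron-Liebler $k$-set of $\mathrm{AG}(n,q)$ if its characteristic vector lies in $\mathrm{Im}(A_n^T)$, with parameter $|\mathcal{L}|/\left[{n\atop k}\right]_q$. *)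

From HB Require Import structures.
From mathcomp Require Import all_boot all_order all_algebra all_field.
From mathcomp Require Import reals.
Unset Printing Implicit Defensive.
Import Order.TTheory GRing.Theory Num.Theory.
Local Open Scope ring_scope.

(* PG(n,q) is modelled by the vector space F^(n+1) = 'rV[F]_(n.+1) over a finite
   field F with q = #|F|.  A projective subspace of vector dimension d is
   represented canonically by its square generator matrix <<A>>%MS. *)
Definition subspaces_dim (F : finFieldType) (N d : nat) : {set 'M[F]_N} :=
  [set A : 'M[F]_N | (<<A>>%MS == A) && (\rank A == d)].

Definition kspaces (F : finFieldType) (n k : nat) := subspaces_dim F n.+1 k.+1.
Definition points (F : finFieldType) (n : nat) := kspaces F n 0.
Definition hyperplanes (F : finFieldType) (n : nat) := subspaces_dim F n.+1 n.

(* affine points / affine k-spaces of AG(n,q) = PG(n,q) minus pi_inf = H *)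
Definition affine_points (F : finFieldType) (n : nat) (H : 'M[F]_n.+1) :=
  [set p in points F n | ~~ (p <= H)%MS].
Definition affine_kspaces (F : finFieldType) (n k : nat) (H : 'M[F]_n.+1) :=
  [set K in kspaces F n k | ~~ (K <= H)%MS].

Definition gauss_binom (R : realType) (q : R) (a b : nat) : R :=
  \prod_(i < b) ((q ^+ (a - i) - 1) / (q ^+ i.+1 - 1)).

(* Cameron-Liebler k-set of PG(n,q): the characteristic vector of L lies in
   the real row space Im(P_n^T), i.e. chi_L = P_n^T w for some real w indexed
   by points: chi_L(K) = sum_{p point, p in K} w(p). *)
Definition CL_PG (R : realType) (F : finFieldType) (n k : nat)
    (L : {set 'M[F]_n.+1}) : Prop :=
  L \subset kspaces F n k /\
  exists w : 'M[F]_n.+1 -> R,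
    forall K, K \in kspaces F n k ->
      ((K \in L)%:R : R) = \sum_(p in points F n | (p <= K)%MS) w p.

(* Cameron-Liebler k-set of AG(n,q) (pi_inf = H): L is a set of affine
   k-spaces with chi_L in Im(A_n^T), A_n = affine points vs affine k-spaces. *)
Definition CL_AG (R : realType) (F : finFieldType) (n k : nat)
    (H : 'M[F]_n.+1) (L : {set 'M[F]_n.+1}) : Prop :=
  L \subset affine_kspaces F n k H /\
  exists w : 'M[F]_n.+1 -> R,
    forall K, K \in affine_kspaces F n k H ->
      ((K \in L)%:R : R) = \sum_(p in affine_points F n H | (p <= K)%MS) w p.

(* parameter |L| / [n choose k]_q (same normalisation in AG and PG) *)
Definition CL_param (R : realType) (F : finFieldType) (n k : nat)
    (L : {set 'M[F]_n.+1}) : R :=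
  (#|L|%:R) / gauss_binom R (#|F|%:R) n k.

From HB Require Import structures.
From mathcomp Require Import all_boot all_order all_algebra all_field.
From mathcomp Require Import mxabelem.
From mathcomp Require Import reals.
From mathcomp Require Import ring zify.
Import Order.TTheory GRing.Theory Num.Theory.
Local Open Scope ring_scope.

(* Add to L all k-spaces of the hyperplane at infinity H.  Extending the
   affine weight w by 0 on H gives a point weight whose P_n^T-image is the
   characteristic vector of L (a k-space inside H contains no affine point),
   and the weight that is constant on H and constant off H, with suitable
   constants, has as image the characteristic vector of the k-spaces of H.
   The parameter grows by [n, k+1]_q / [n, k]_q = (q^(n-k) - 1)/(q^(k+1) - 1),
   counting subspaces through their ordered bases. *)

Section SubspaceCount.
Variable F : finFieldType.
Local Notation q := #|F|.

Lemma row_free_col_mx N d (r : 'rV[F]_N) (B : 'M[F]_(d, N)) :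
  row_free (col_mx r B) = row_free B && ~~ (r <= B)%MS.
Proof.
have [rB | nrB] := boolP (r <= B)%MS.
  rewrite andbF /row_free -addsmxE (addsmx_idPr rB) /=.
  by rewrite add1n ltn_eqF // ltnS rank_leq_row.
have r_neq0 : r != 0 by apply: contraNneq nrB => ->; rewrite sub0mx.
have rk_r : \rank r = 1%N by rewrite rank_rV r_neq0.
have rk_cap : \rank (r :&: B)%MS = 0%N.
  have : (\rank (r :&: B)%MS < \rank r)%N.
    rewrite (ltn_leqif (mxrank_leqif_sup _)) ?capmxSl //.
    by rewrite sub_capmx submx_refl.
  by rewrite rk_r ltnS leqn0 => /eqP.
rewrite /row_free -addsmxE; have := mxrank_sum_cap r B.
by rewrite rk_cap rk_r addn0 => ->; rewrite add1n eqSS andbT.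
Qed.

Lemma card_row_free_submx m N d (V : 'M[F]_(m, N)) :
  #|[set B : 'M[F]_(d, N) | row_free B && (B <= V)%MS]| =
  (\prod_(i < d) (q ^ \rank V - q ^ i))%N.
Proof.
elim: d => [|d IHd].
  rewrite big_ord0 -[1%N](card_mx F 0 N); apply: eq_card => B.
  by rewrite inE flatmx0 sub0mx /row_free mxrank0.
rewrite big_ord_recr /= -IHd -[LHS]sum1_card -add1n.
rewrite (partition_big dsubmx [pred B | row_free B && (B <= V)%MS]) /=;
  last first.
  move=> B; rewrite inE -{1 2}(vsubmxK B) row_free_col_mx col_mx_sub.
  by case/andP=> /andP [-> _] /andP [_ ->].
rewrite -sum_nat_const; apply: eq_big => [B | B /andP [freeB BV]].
  by rewrite inE.
rewrite (reindex (col_mx^~ B)) /=; last first.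
  exists usubmx => [v _ | A]; first by rewrite col_mxKu.
  by case/andP=> _ /eqP <-; rewrite vsubmxK.
rewrite sum1_card -[in RHS](eqnP freeB) -!card_rowg -cardsDS ?rowgS //.
apply: eq_card => v; rewrite -topredE /= !inE.
rewrite row_free_col_mx col_mx_sub col_mxKd eqxx freeB BV.
by rewrite !andbT.
Qed.

Lemma card_subspaces_submx_mul N d m (V : 'M[F]_(m, N)) :
  (#|[set A in subspaces_dim F N d | (A <= V)%MS]| *
     \prod_(i < d) (q ^ d - q ^ i))%N =
  (\prod_(i < d) (q ^ \rank V - q ^ i))%N.
Proof.
rewrite -card_row_free_submx -[RHS]sum1_card.
rewrite (partition_big (fun B => <<B>>%MS)
          [in [set A in subspaces_dim F N d | (A <= V)%MS]]) /=; last first.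
  move=> B; rewrite inE => /andP [freeB BV].
  by rewrite !inE genmx_id mxrank_gen genmxE (eqnP freeB) BV !eqxx.
rewrite -sum_nat_const; apply: eq_bigr => A.
rewrite !inE => /andP [/andP [/eqP genA /eqP rkA] AV].
rewrite -[in (q ^ d)%N]rkA -card_row_free_submx sum1_card.
apply/esym/eq_card => B; rewrite -topredE /= !inE.
apply/idP/idP => [/andP [/andP [freeB _] /eqP <-] | /andP [freeB BA]].
  by rewrite freeB /= genmxE submx_refl.
rewrite freeB (submx_trans BA AV) -genA; apply/eqP/eq_genmx/eqmxP.
by rewrite -(mxrank_leqif_eq BA).2 (eqnP freeB) rkA.
Qed.

End SubspaceCount.

Lemma mxrank_cap_hyperplane (F : fieldType) n m
    (X : 'M[F]_(m, n.+1)) (H : 'M[F]_n.+1) :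
  \rank H = n -> ~~ (X <= H)%MS -> \rank (X :&: H)%MS = (\rank X).-1.
Proof.
move=> rkH XnH.
have rk_sum : \rank (X + H)%MS = n.+1.
  have : (\rank H < \rank (X + H))%N.
    rewrite (ltn_leqif (mxrank_leqif_sup (addsmxSr X H))).
    by rewrite addsmx_sub submx_refl andbT.
  by rewrite rkH => lt_n; apply/eqP; rewrite eqn_leq rank_leq_col lt_n.
by have := mxrank_sum_cap X H; rewrite rk_sum rkH; lia.
Qed.

Section GaussianBinomial.
Context {R : realType} {q : R}.

Lemma gauss_binom1 a : gauss_binom R q a 1 = (q ^+ a - 1) / (q - 1).
Proof. by rewrite /gauss_binom big_ord1 subn0 expr1. Qed.

Lemma gauss_binomS a d :
  gauss_binom R q a d.+1 =
  gauss_binom R q a d * ((q ^+ (a - d) - 1) / (q ^+ d.+1 - 1)).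
Proof. by rewrite /gauss_binom big_ord_recr. Qed.

Lemma gauss_binom_eq0 a d : (a < d)%N -> gauss_binom R q a d = 0.
Proof.
move=> lt_ad; apply/eqP/prodf_eq0; exists (Ordinal lt_ad) => //=.
by rewrite subnn expr0 subrr mul0r.
Qed.

Hypothesis q_gt1 : 1 < q.

Lemma exprB1_neq0 j : (0 < j)%N -> q ^+ j - 1 != 0.
Proof. by move=> j_gt0; rewrite subr_eq0 gt_eqF // exprn_egt1 // -lt0n. Qed.

Lemma gauss_binom_neq0 a d : (d <= a)%N -> gauss_binom R q a d != 0.
Proof.
move=> le_da; apply/prodf_neq0 => i _.
by rewrite mulf_neq0 ?invr_neq0 ?exprB1_neq0 // subn_gt0 (leq_trans _ le_da).
Qed.

Lemma gauss_binom_prod a d : (d <= a)%N ->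
  gauss_binom R q a d * \prod_(i < d) (q ^+ d - q ^+ i) =
  \prod_(i < d) (q ^+ a - q ^+ i).
Proof.
move=> le_da.
have exprB j i : (i <= j)%N -> q ^+ j - q ^+ i = q ^+ i * (q ^+ (j - i) - 1).
  by move=> le_ij; rewrite mulrBr mulr1 -exprD subnKC.
rewrite (eq_bigr _ (fun (i : 'I_d) _ => exprB d i (ltnW (ltn_ord i)))).
rewrite [RHS](eq_bigr _ (fun (i : 'I_d) _ =>
  exprB a i (leq_trans (ltnW (ltn_ord i)) le_da))).
rewrite !big_split /= mulrCA; congr (_ * _).
rewrite (reindex_inj rev_ord_inj) /= -big_split /=; apply: eq_bigr => i _.
by rewrite subKn // divfK ?exprB1_neq0.
Qed.

End GaussianBinomial.

Section ProjectiveCounting.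
Variables (R : realType) (F : finFieldType).
Local Notation q := (#|F|%:R : R).

Lemma natr_card_gt1 : 1 < q.
Proof. by rewrite ltr1n card_finNzRing_gt1. Qed.

Lemma card_subspaces_submx N d m (V : 'M[F]_(m, N)) :
  #|[set A in subspaces_dim F N d | (A <= V)%MS]|%:R =
  gauss_binom R q (\rank V) d.
Proof.
have [lt_Vd | le_dV] := ltnP (\rank V) d.
  rewrite gauss_binom_eq0 //; apply/eqP; rewrite pnatr_eq0 cards_eq0.
  apply/eqP/setP => A; rewrite !inE; apply/negP.
  by case/andP=> /andP [_ /eqP rkA] /mxrankS; rewrite rkA leqNgt lt_Vd.
have natrB_expn a i :
    (i <= a)%N -> ((#|F| ^ a - #|F| ^ i)%N%:R : R) = q ^+ a - q ^+ i.
  move=> le_ia; rewrite natrB ?natrX // leq_pexp2l //.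
  exact: ltnW (card_finNzRing_gt1 F).
have := congr1 (GRing.natmul (1 : R)) (card_subspaces_submx_mul F N d m V).
rewrite natrM !natr_prod.
rewrite (eq_bigr _ (fun (i : 'I_d) _ => natrB_expn d i (ltnW (ltn_ord i)))).
rewrite [X in _ = X](eq_bigr _ (fun (i : 'I_d) _ =>
  natrB_expn _ i (leq_trans (ltnW (ltn_ord i)) le_dV))).
rewrite -(gauss_binom_prod natr_card_gt1 _ _ le_dV); apply: mulIf.
apply/prodf_neq0 => i _; rewrite subr_eq0 gt_eqF // ltr_eXn2l ?natr_card_gt1 //.
Qed.

Lemma card_points_submx n m (X : 'M[F]_(m, n.+1)) :
  #|[set p in points F n | (p <= X)%MS]|%:R = (q ^+ \rank X - 1) / (q - 1).
Proof. by rewrite card_subspaces_submx gauss_binom1. Qed.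

End ProjectiveCounting.

Lemma sumr_const_pred (R : pzSemiRingType) (T : finType) (P : pred T) (c : R) :
  \sum_(i | P i) c = c * #|[set i | P i]|%:R.
Proof. by rewrite mulr_natr -sumr_const; apply: eq_bigl => i; rewrite inE. Qed.

Definition kspaces_in_hyperplane (F : finFieldType) n k (H : 'M[F]_n.+1) :=
  [set K in kspaces F n k | (K <= H)%MS].

Section CameronLiebler.
Variables (R : realType) (F : finFieldType) (n k : nat) (H : 'M[F]_n.+1).
Hypothesis rkH : \rank H = n.
Local Notation q := (#|F|%:R : R).
Local Notation S := (kspaces_in_hyperplane F n k H).

Lemma rank_kspace K : K \in kspaces F n k -> \rank K = k.+1.
Proof. by rewrite inE => /andP [_ /eqP]. Qed.

Lemma card_affine_points_kspace K :
  K \in kspaces F n k -> ~~ (K <= H)%MS ->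
  #|[set p in affine_points F n H | (p <= K)%MS]|%:R = q ^+ k.
Proof.
move=> kK KnH.
have := cardsID [set p | (p <= H)%MS] [set p in points F n | (p <= K)%MS].
have -> : [set p in points F n | (p <= K)%MS] :&: [set p | (p <= H)%MS] =
          [set p in points F n | (p <= K :&: H)%MS].
  by apply/setP => p; rewrite !inE sub_capmx andbA.
have -> : [set p in points F n | (p <= K)%MS] :\: [set p | (p <= H)%MS] =
          [set p in affine_points F n H | (p <= K)%MS].
  by apply/setP => p; rewrite !inE andbCA andbA.
move/(congr1 (GRing.natmul (1 : R))); rewrite natrD !card_points_submx.
rewrite mxrank_cap_hyperplane // rank_kspace //= => card_K.
have q1_neq0 : q - 1 != 0 by rewrite subr_eq0 gt_eqF ?natr_card_gt1.
apply: (addrI ((q ^+ k - 1) / (q - 1))); rewrite card_K exprS.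
by field.
Qed.

(* The two values are forced: a k-space of H has (q^(k+1) - 1)/(q - 1) points
   and must get total weight 1; any other k-space has (q^k - 1)/(q - 1) points
   in H and q^k outside, and must get total weight 0. *)
Definition hyperplane_weight (p : 'M[F]_n.+1) : R :=
  if (p <= H)%MS then (q - 1) / (q ^+ k.+1 - 1)
  else - (q ^+ k - 1) / ((q ^+ k.+1 - 1) * q ^+ k).

Lemma sum_hyperplane_weight K : K \in kspaces F n k ->
  \sum_(p in points F n | (p <= K)%MS) hyperplane_weight p = (K <= H)%MS%:R.
Proof.
move=> kK; have q1_neq0 : q - 1 != 0 by rewrite subr_eq0 gt_eqF ?natr_card_gt1.
have qk1_neq0 : q ^+ k.+1 - 1 != 0 by rewrite exprB1_neq0 ?natr_card_gt1.
have qk_neq0 : q ^+ k != 0.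
  by rewrite expf_neq0 // gt_eqF // (lt_trans ltr01 (natr_card_gt1 R F)).
rewrite /hyperplane_weight; have [KH | KnH] := boolP (K <= H)%MS.
  rewrite (eq_bigr (fun=> (q - 1) / (q ^+ k.+1 - 1))); last first.
    by move=> p /andP [_ pK]; rewrite (submx_trans pK KH).
  rewrite sumr_const_pred card_points_submx rank_kspace //=.
  by field; rewrite q1_neq0 qk1_neq0.
rewrite (bigID (fun p => p <= H)%MS) /=.
rewrite (eq_bigr (fun=> (q - 1) / (q ^+ k.+1 - 1)));
  last by move=> p /andP [_ ->].
rewrite [X in _ + X](eq_bigr (fun=> - (q ^+ k - 1) / ((q ^+ k.+1 - 1) * q ^+ k)));
  last by move=> p /andP [_ /negbTE ->].
rewrite !sumr_const_pred.
have -> : [set p | (p \in points F n) && (p <= K)%MS && (p <= H)%MS] =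
          [set p in points F n | (p <= K :&: H)%MS].
  by apply/setP => p; rewrite !inE sub_capmx andbA.
have -> : [set p | (p \in points F n) && (p <= K)%MS && ~~ (p <= H)%MS] =
          [set p in affine_points F n H | (p <= K)%MS].
  by apply/setP => p; rewrite !inE andbAC.
rewrite card_points_submx mxrank_cap_hyperplane // rank_kspace //=.
rewrite card_affine_points_kspace //.
by field; rewrite qk_neq0 qk1_neq0 q1_neq0.
Qed.

Lemma sum_affine_points (w : 'M[F]_n.+1 -> R) (K : 'M[F]_n.+1) :
  \sum_(p in affine_points F n H | (p <= K)%MS) w p =
  \sum_(p in points F n | (p <= K)%MS) (if (p <= H)%MS then 0 else w p).
Proof.
rewrite big_mkcond [RHS]big_mkcond; apply: eq_bigr => p _; rewrite inE.
by case: (p \in points F n); case: (p <= H)%MS; case: (p <= K)%MS.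
Qed.

Lemma affine_kspacesI_hyperplane {L : {set 'M[F]_n.+1}} :
  L \subset affine_kspaces F n k H -> L :&: S = set0.
Proof.
move=> LA; apply/setP => K; rewrite !inE; apply/negbTE/andP.
by case=> /(subsetP LA); rewrite inE => /andP [_ /negbTE ->] /andP [].
Qed.

Lemma CL_PG_setU_hyperplane (L : {set 'M[F]_n.+1}) :
  CL_AG R F n k H L -> CL_PG R F n k (L :|: S).
Proof.
case=> LA [w Lw]; split.
  by apply/subsetP => K /setUP [/(subsetP LA) |]; rewrite inE => /andP [].
exists (fun p => (if (p <= H)%MS then 0 else w p) + hyperplane_weight p) => K kK.
rewrite big_split /= sum_hyperplane_weight // -sum_affine_points.
have [KH | KnH] := boolP (K <= H)%MS.
  have KS : K \in S by rewrite inE kK KH.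
  rewrite in_setU KS orbT big_pred0 ?add0r // => p.
  apply/negbTE/andP => -[]; rewrite inE => /andP [_ /negP pnH].
  by move/submx_trans/(_ KH).
have KnS : K \notin S by rewrite inE (negbTE KnH) andbF.
by rewrite inE (negbTE KnS) orbF addr0 Lw // inE kK.
Qed.

Lemma card_kspaces_in_hyperplane : #|S|%:R = gauss_binom R q n k.+1.
Proof. by rewrite card_subspaces_submx rkH. Qed.

End CameronLiebler.

Theorem theorem3p5 (R : realType) (F : finFieldType) (n k : nat)
    (H : 'M[F]_n.+1) (L : {set 'M[F]_n.+1}) :
  (1 <= k)%N -> (k <= n.-1)%N ->
  H \in hyperplanes F n ->
  CL_AG R F n k H L ->
  exists L' : {set 'M[F]_n.+1},
    CL_PG R F n k L' /\
    CL_param R F n k L' =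
      CL_param R F n k L
      + ((#|F|%:R : R) ^+ (n - k) - 1) / ((#|F|%:R : R) ^+ k.+1 - 1).
Proof.
move=> k_gt0 le_k_n1 hypH CL.
have rkH : \rank H = n by move: hypH; rewrite inE => /andP [_ /eqP].
have lt_kn : (k < n)%N by lia.
set S := kspaces_in_hyperplane F n k H.
exists (L :|: S); split; first exact: CL_PG_setU_hyperplane.
have card_LS : #|L :|: S| = (#|L| + #|S|)%N.
  by rewrite -cardsUI (affine_kspacesI_hyperplane F n k H CL.1) cards0 addn0.
rewrite /CL_param card_LS natrD mulrDl card_kspaces_in_hyperplane // gauss_binomS.
by rewrite mulrAC mulfV ?mul1r // gauss_binom_neq0 ?natr_card_gt1 // ltnW.
Qed.
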